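(* Let $m$ be a non-negative integer and let $S=(u_0,\dots,u_{n-1})$ be an antisymmetric finite sequence of elements of $\mathbb{Z}/m\mathbb{Z}$. Then the Steinhaus triangle $\Delta S$ is balanced if and only if the triangle $\nabla S$ is balanced.
   Context: $S$ is antisymmetric if $u_{n-1-j}=-u_j$ for all $j\in\{0,\dots,n-1\}$. The Steinhaus triangle $\Delta S$ is $(a_{i,j})_{i,j\ge0,\,i+j<n}$ with $a_{0,j}=u_j$ and $a_{i,j}=a_{i-1,j}+a_{i-1,j+1}$ for $i\ge1$; the triangle $\nabla S$ is $(b_{i,j})_{i,j\ge0,\,i+j<n}$ with $b_{0,j}=u_j$ and $b_{i,j}=-b_{i-1,j}-b_{i-1,j+1}$ for $i\ge1$. A triangle is balanced if every element of $\mathbb{Z}/m\mathbb{Z}$ occurs the same number of times among its entries. *)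

(* Z/mZ is modelled by int with the canonical residue map
   x |-> (x %% m)%Z (for m = 0 this is the identity, i.e. Z/0Z = Z). *)
From mathcomp Require Import all_boot all_order all_algebra.
Set Implicit Arguments. Unset Strict Implicit. Unset Printing Implicit Defensive.
Import Order.TTheory GRing.Theory Num.Theory.
Local Open Scope ring_scope.

Definition useq (S : seq int) (j : nat) : int := nth 0 S j.

Definition antisymmetric_mod (m : nat) (S : seq int) : Prop :=
  forall j : nat, (j < size S)%N ->
    (useq S (size S - 1 - j) = - useq S j %[mod (m : int)])%Z.

Fixpoint delta_entry (m : nat) (S : seq int) (i j : nat) : int :=
  match i with
  | 0 => (useq S j %% (m : int))%Z
  | i'.+1 => ((delta_entry m S i' j + delta_entry m S i' j.+1) %% (m : int))%Z
  end.

Fixpoint nabla_entry (m : nat) (S : seq int) (i j : nat) : int :=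
  match i with
  | 0 => (useq S j %% (m : int))%Z
  | i'.+1 => ((- nabla_entry m S i' j - nabla_entry m S i' j.+1) %% (m : int))%Z
  end.

Definition triangle_entries (n : nat) (t : nat -> nat -> int) : seq int :=
  [seq t i j | i <- iota 0 n, j <- iota 0 (n - i)].

Definition balanced (m : nat) (n : nat) (t : nat -> nat -> int) : Prop :=
  forall x y : int,
    count (fun a => (a == x %[mod (m : int)])%Z) (triangle_entries n t) =
    count (fun a => (a == y %[mod (m : int)])%Z) (triangle_entries n t).

Definition Delta_balanced (m : nat) (S : seq int) : Prop :=
  balanced m (size S) (delta_entry m S).
Definition Nabla_balanced (m : nat) (S : seq int) : Prop :=
  balanced m (size S) (nabla_entry m S).

(** The two triangles differ only by signs: modulo [m], the entry of [nabla S]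
    at [(i, j)] is [(-1)^i] times that of [Delta S], since negating a row of
    [Delta S] and applying the [nabla] rule gives the negated next row.
    Antisymmetry of [S] propagates down [Delta S]: every row [i] is again
    antisymmetric, [a_{i, n-1-i-j} = - a_{i,j}].  Hence every odd row of
    [nabla S] is the reverse of the corresponding row of [Delta S] and every
    even row equals it, so both triangles contain each residue equally often. *)
From mathcomp Require Import all_boot all_order all_algebra.
From mathcomp Require Import zify.
Set Implicit Arguments. Unset Strict Implicit. Unset Printing Implicit Defensive.
Import Order.TTheory GRing.Theory Num.Theory.
Local Open Scope ring_scope.

Definition residue_count (d x : int) (s : seq int) : nat :=
  count (fun a => (a == x %[mod d])%Z) s.

Definition triangle_row (n : nat) (t : nat -> nat -> int) (i : nat) : seq int :=
  [seq t i j | j <- iota 0 (n - i)].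

Lemma residue_count_map_eqmod (d x : int) (T : eqType) (s : seq T)
    (f g : T -> int) :
  {in s, forall j, (f j = g j %[mod d])%Z} ->
  residue_count d x (map f s) = residue_count d x (map g s).
Proof.
move=> fg; rewrite /residue_count !count_map.
by apply: eq_in_count => j /fg; rewrite /preim /= => ->.
Qed.

Lemma rev_iota0 (k : nat) : rev (iota 0 k) = [seq (k.-1 - j)%N | j <- iota 0 k].
Proof.
elim: k => [|k IH] //.
rewrite -[in LHS]addn1 iotaD rev_cat IH /= (iotaDl 1 0) -map_comp subn0.
by congr (_ :: _); apply: eq_map => j /=; lia.
Qed.

Lemma balanced_rowwise (m n : nat) (t1 t2 : nat -> nat -> int) :
  (forall i x, (i < n)%N -> residue_count m x (triangle_row n t1 i) =
                            residue_count m x (triangle_row n t2 i)) ->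
  balanced m n t1 <-> balanced m n t2.
Proof.
move=> rows.
have counts x : residue_count m x (triangle_entries n t1) =
                residue_count m x (triangle_entries n t2).
  rewrite /residue_count /triangle_entries !count_flatten -!map_comp.
  congr sumn; apply/eq_in_map => i; rewrite mem_iota => /andP[_ ltin].
  exact: rows.
by split=> bal x y; have := bal x y; rewrite /balanced -!/(residue_count _ _ _) !counts.
Qed.

Section SteinhausTriangles.
Variables (m : nat) (S : seq int).
Local Notation a := (delta_entry m S).
Local Notation b := (nabla_entry m S).

Lemma nabla_entry_sign i j : (b i j = (-1) ^+ i * a i j %[mod m])%Z.
Proof.
elim: i j => [|i IH] j /=; first by rewrite mul1r.
rewrite modz_mod modzMmr exprS mulN1r mulNr -opprD -modzNm -modzDm !IH.
by rewrite modzDm modzNm -mulrDr.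
Qed.

Hypothesis S_antisym : antisymmetric_mod m S.

Lemma delta_entry_antisym i j k : (i + j + k).+1 = size S ->
  (a i k = - a i j %[mod m])%Z.
Proof.
elim: i j k => [|i IH] j k /= sizeS.
  have /S_antisym : (j < size S)%N by lia.
  by rewrite /useq (_ : size S - 1 - j = k)%N ?modz_mod ?modzNm //; lia.
rewrite !modz_mod -modzDm (IH j.+1) ?(IH j k.+1) ?modzDm ?modzNm; try lia.
by rewrite opprD addrC.
Qed.

Lemma nabla_row_residue_count i x : (i < size S)%N ->
  residue_count m x (triangle_row (size S) b i) =
  residue_count m x (triangle_row (size S) a i).
Proof.
move=> ltiS; rewrite /triangle_row; case: (boolP (odd i)) => [odd_i | even_i].
- rewrite /residue_count -[RHS]count_rev -map_rev rev_iota0 -map_comp.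
  apply: residue_count_map_eqmod => j; rewrite mem_iota => /andP[_ ltj] /=.
  rewrite nabla_entry_sign -signr_odd odd_i mulN1r (delta_entry_antisym (j := j)) //.
  lia.
- apply: residue_count_map_eqmod => j _.
  by rewrite nabla_entry_sign -signr_odd (negbTE even_i) mul1r.
Qed.

End SteinhausTriangles.

Theorem corollary1 (m : nat) (S : seq int) :
  antisymmetric_mod m S -> (Delta_balanced m S <-> Nabla_balanced m S).
Proof.
move=> S_antisym; apply: iff_sym; apply: balanced_rowwise => i x ltiS.
exact: nabla_row_residue_count.
Qed.
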